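(* For every graph $G$, $\operatorname{smw}(G)\le\operatorname{tw}(G)+1$, where $\operatorname{tw}$ denotes treewidth. Moreover, for every class of graphs of bounded sm-width, the clique-width is bounded on that class.
   Context: A split of $G$ is a partition $(V_1,V_2)$ of $V(G)$ with $|V_1|,|V_2|\ge2$ such that every vertex of $V_1$ with a neighbour in $V_2$ has the same neighbourhood in $V_2$. $\operatorname{mm}(A)$ is the maximum size of a matching among edges between $A$ and $V(G)\setminus A$; $\operatorname{sm}(A)=1$ if $(A,V(G)\setminus A)$ is a split, else $\operatorname{mm}(A)$. A branch decomposition of $G$: tree of max degree 3 with a bijection from leaves to $V(G)$; each tree edge $e$ induces the cut given by leaf-images of the two components of $T-e$. $\operatorname{smw}(G)$ is the minimum over branch decompositions of the maximum of $\operatorname{sm}$ over induced cuts. *)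

From HB Require Import structures.
From mathcomp Require Import all_boot.
Set Implicit Arguments. Unset Strict Implicit. Unset Printing Implicit Defensive.

Definition is_graph (V : finType) (E : rel V) : Prop :=
  symmetric E /\ irreflexive E.

Definition del_edge (N : finType) (t : rel N) (a b : N) : rel N :=
  [rel x y | t x y && ~~ ((x == a) && (y == b) || (x == b) && (y == a))].

(* A tree: nonempty, simple, connected graph in which every edge is a bridge
   (i.e. acyclic). *)
Definition is_tree (N : finType) (t : rel N) : Prop :=
  [/\ 0 < #|N|, is_graph t,
      (forall x y : N, connect t x y) &
      (forall a b : N, t a b -> ~~ connect (del_edge t a b) a b)].

Definition degree (N : finType) (t : rel N) (x : N) : nat := #|[set y | t x y]|.

(* Leaves: nodes of degree at most 1 (degree 0 only for the one-node tree). *)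
Definition is_leaf (N : finType) (t : rel N) (x : N) : bool := degree t x <= 1.

Definition tree_decomposition (V : finType) (E : rel V)
    (N : finType) (t : rel N) (bag : N -> {set V}) (k : nat) : Prop :=
  [/\ is_tree t,
      (forall v : V, exists x : N, v \in bag x),
      (forall u v : V, E u v -> exists x : N, (u \in bag x) && (v \in bag x)),
      (forall (v : V) (a b : N), v \in bag a -> v \in bag b ->
          connect [rel x y | t x y && (v \in bag x) && (v \in bag y)] a b) &
      (forall x : N, #|bag x| <= k.+1)].

Definition tw_le (V : finType) (E : rel V) (k : nat) : Prop :=
  exists (N : finType) (t : rel N) (bag : N -> {set V}),
    tree_decomposition E t bag k.

Definition cut_matching (V : finType) (E : rel V) (A : {set V})
    (M : {set V * V}) : bool :=
  [forall p in M, [&& p.1 \in A, p.2 \notin A & E p.1 p.2]] &&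
  [forall p in M, forall q in M, ((p.1 == q.1) || (p.2 == q.2)) ==> (p == q)].

Definition mm (V : finType) (E : rel V) (A : {set V}) : nat :=
  \max_(M : {set V * V} | cut_matching E A M) #|M|.

Definition is_split (V : finType) (E : rel V) (A : {set V}) : bool :=
  [&& 2 <= #|A|, 2 <= #|~: A| &
   [forall x in A, forall y in A,
      ([exists z in ~: A, E x z] && [exists z in ~: A, E y z]) ==>
      [forall z in ~: A, E x z == E y z]]].

Definition sm (V : finType) (E : rel V) (A : {set V}) : nat :=
  if is_split E A then 1 else mm E A.

Definition branch_decomposition (V : finType) (N : finType) (t : rel N)
    (f : V -> N) : Prop :=
  [/\ is_tree t, (forall x : N, degree t x <= 3), injective f &
      (forall x : N, is_leaf t x <-> exists v : V, f v = x)].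

Definition induced_cut (V : finType) (N : finType) (t : rel N) (f : V -> N)
    (a b : N) : {set V} :=
  [set v | connect (del_edge t a b) a (f v)].

Definition bd_smwidth (V : finType) (E : rel V) (N : finType) (t : rel N)
    (f : V -> N) : nat :=
  \max_(p : N * N | t p.1 p.2) sm E (induced_cut t f p.1 p.2).

(* smw(G) <= w.  Convention: the graph with no vertices has smw 0. *)
Definition smw_le (V : finType) (E : rel V) (w : nat) : Prop :=
  #|V| = 0 \/
  exists (N : finType) (t : rel N) (f : V -> N),
    branch_decomposition t f /\ bd_smwidth E t f <= w.

Definition sum_rel (V1 V2 : finType) (E1 : rel V1) (E2 : rel V2)
    : rel (V1 + V2)%type :=
  fun x y => match x, y with
             | inl a, inl b => E1 a b
             | inr a, inr b => E2 a b
             | _, _ => false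
             end.

Definition sum_lab (k : nat) (V1 V2 : finType) (l1 : V1 -> 'I_k) (l2 : V2 -> 'I_k)
    : (V1 + V2)%type -> 'I_k :=
  fun x => match x with inl a => l1 a | inr b => l2 b end.

(* k_expr k V E l : the labelled graph (V,E,l) (labels in 'I_k) is, up to
   isomorphism, the value of a k-expression. *)
Inductive k_expr (k : nat) : forall V : finType, rel V -> (V -> 'I_k) -> Prop :=
  | ke_empty (l : void -> 'I_k) : k_expr (fun _ _ => false) l
  | ke_vertex (i : 'I_k) : k_expr (fun _ _ : unit => false) (fun _ => i)
  | ke_union (V1 V2 : finType) E1 E2 l1 l2 :
      @k_expr k V1 E1 l1 -> @k_expr k V2 E2 l2 ->
      @k_expr k (V1 + V2)%type (sum_rel E1 E2) (sum_lab l1 l2)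
  | ke_join (V : finType) E l (i j : 'I_k) :
      @k_expr k V E l -> i != j ->
      @k_expr k V (fun x y => E x y || ((l x == i) && (l y == j))
                                    || ((l x == j) && (l y == i))) l
  | ke_relabel (V : finType) E l (i j : 'I_k) :
      @k_expr k V E l ->
      @k_expr k V E (fun x => if l x == i then j else l x)
  | ke_iso (V W : finType) (E : rel V) (l : V -> 'I_k) (E' : rel W)
      (l' : W -> 'I_k) (g : V -> W) :
      @k_expr k V E l -> bijective g ->
      (forall x y, E' (g x) (g y) = E x y) -> (forall x, l' (g x) = l x) ->
      @k_expr k W E' l'.

Definition cw_le (V : finType) (E : rel V) (c : nat) : Prop :=
  exists l : V -> 'I_c, k_expr E l.

(* Part 1: along a tree decomposition of width [k], the vertices are collected into a
   rooted binary tree, one tree node at a time: below a node [x], the set of leaves is a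
   union of single vertices living at [x] and of the vertex sets hanging off the children
   of [x], and every such union has all edges leaving it covered by [bag x]. Every cut of
   the resulting branch decomposition thus has a vertex cover of size [k+1], which bounds
   the maximum matching across it.
   Part 2: a cut of sm-width at most [k] has at most [2^k + k + 2] classes of vertices
   with equal neighbourhoods across it (a split has two; otherwise the ends of a maximum
   matching cover the cut, so a class is either that of a matched vertex or a set of
   matched vertices). Going up a branch decomposition, the subgraph on one side of a cut
   is generated with one label per class: the two sides below it get fresh labels per
   class from disjoint blocks of [3 (2^k + k + 2)] labels, adjacent classes are joined,
   and the labels are then renamed to the classes of the union. *)

From HB Require Import structures.
From mathcomp Require Import all_boot zify.
Set Implicit Arguments. Unset Strict Implicit. Unset Printing Implicit Defensive.

Lemma connect_ind (T : finType) (e : rel T) (P : T -> Prop) x y :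
  connect e x y -> P x -> (forall u v, e u v -> P u -> P v) -> P y.
Proof.
move=> /connectP[s pth ->] Px HP.
by elim: s x pth Px => //= z s IH x /andP[exz pth] Px; apply: IH pth (HP _ _ exz Px).
Qed.

Definition is_edge (T : finType) (a b y z : T) :=
  (y == a) && (z == b) || (y == b) && (z == a).

Lemma del_edgeE (T : finType) (t : rel T) a b y z :
  del_edge t a b y z = t y z && ~~ is_edge a b y z.
Proof. by []. Qed.

Lemma del_edge_sym (T : finType) (t : rel T) a b :
  symmetric t -> symmetric (del_edge t a b).
Proof.
move=> ts y z; rewrite !del_edgeE ts /is_edge.
by case: (y == a); case: (z == b); case: (y == b); case: (z == a).
Qed.

Lemma del_edgeC (T : finType) (t : rel T) a b : del_edge t a b =2 del_edge t b a.
Proof.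
move=> y z; rewrite !del_edgeE /is_edge.
by case: (y == a); case: (z == b); case: (y == b); case: (z == a).
Qed.

Section Tree.
Variables (N : finType) (t : rel N).
Hypothesis t_tree : is_tree t.

(* The component of [x] in [T - xp]; for [p = x] no edge is removed and it is all of [T]. *)
Definition side (x p : N) := [set y | connect (del_edge t x p) x y].

Lemma tree_sym : symmetric t. Proof. by case: t_tree => _ []. Qed.
Lemma tree_irr : irreflexive t. Proof. by case: t_tree => _ []. Qed.
Lemma tree_connect x y : connect t x y. Proof. by case: t_tree. Qed.

Lemma side_self x p : x \in side x p.
Proof. by rewrite inE connect0. Qed.

Lemma side_step x p y z : y \in side x p -> del_edge t x p y z -> z \in side x p.
Proof. by rewrite !inE => Hy /connect1; apply: connect_trans. Qed.

Lemma side_stepV x p y z : z \in side x p -> del_edge t x p y z -> y \in side x p.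
Proof. by move=> Hz d; apply: side_step Hz _; rewrite (del_edge_sym _ _ tree_sym). Qed.

Lemma notin_side c x : t c x -> x \notin side c x.
Proof. by case: t_tree => _ _ _ H /H; rewrite inE. Qed.

Lemma edge_del_or a b y z : t y z -> del_edge t a b y z \/ is_edge a b y z.
Proof. by move=> tyz; rewrite del_edgeE tyz; case: is_edge; [right | left]. Qed.

Lemma side_sub x p c : t x c -> c != p -> side c x \subset side x p.
Proof.
move=> txc cp; apply/subsetP => y; rewrite [y \in side c x]inE => Hy.
have Hc : c \in side x p.
  apply: side_step (side_self x p) _; rewrite del_edgeE txc /is_edge eqxx (negbTE cp).
  by apply/negP => /andP[_ /eqP cx]; move: txc; rewrite cx tree_irr.
have xc : x \notin side c x by apply: notin_side; rewrite tree_sym.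
suff [] : y \in side c x /\ y \in side x p by [].
apply: (connect_ind (P := fun y => y \in side c x /\ y \in side x p) Hy); first by split; [apply: side_self |].
move=> u v duv [Hu Hu']; have Hv := side_step Hu duv; split => //.
have [tuv _] := andP duv.
case: (edge_del_or x p tuv) => [|/orP[]/andP[/eqP ux /eqP vp]]; first exact: side_step.
- by subst u; rewrite Hu in xc.
- by subst v; rewrite Hv in xc.
Qed.

Lemma side_lt x p c : t x c -> c != p -> #|side c x| < #|side x p|.
Proof.
move=> txc cp; apply/proper_card/properP; split; first exact: side_sub.
by exists x; [apply: side_self | apply: notin_side; rewrite tree_sym].
Qed.

Lemma sideP x p y : y \in side x p ->
  y = x \/ exists2 c, t x c && (c != p) & y \in side c x.
Proof.
rewrite inE => Hy.
apply: (connect_ind (P := fun y => y = x \/ exists2 c, t x c && (c != p) & y \in side c x) Hy).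
  by left.
move=> u v duv [ux | [c /andP[txc cp] Hu]].
  subst u; right; exists v; last exact: side_self.
  move: duv; rewrite del_edgeE /is_edge eqxx /= => /andP[-> /norP[/negP vp _]].
  by apply/eqP=> vp'; apply: vp; rewrite vp' eqxx.
have [tuv _] := andP duv.
case: (edge_del_or c x tuv) => [d|/orP[]/andP[/eqP uc /eqP vx]].
- by right; exists c; rewrite ?txc ?cp //; apply: side_step Hu d.
- by left.
- by subst u; have := notin_side (etrans (tree_sym c x) txc); rewrite Hu.
Qed.

Lemma side_disj x c d y : t x c -> t x d -> c != d ->
  y \in side c x -> y \notin side d x.
Proof.
move=> txc txd cd Hc; apply/negP; rewrite [y \in side d x]inE => Hd.
have xc := notin_side (etrans (tree_sym c x) txc).
have xd := notin_side (etrans (tree_sym d x) txd).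
suff : y \notin side c x by rewrite Hc.
suff [] : y \in side d x /\ y \notin side c x by [].
apply: (connect_ind (P := fun y => y \in side d x /\ y \notin side c x) Hd).
  split; first exact: side_self.
  apply/negP => dc; move: xc; rewrite (side_step dc) //.
  rewrite del_edgeE tree_sym txd /is_edge /=.
  by apply/negP => /orP[]/andP[/eqP e _]; [move: cd | move: txd]; rewrite e ?eqxx ?tree_irr.
move=> u v duv [Hdu Hcu]; split; first exact: side_step Hdu duv.
apply/negP => Hcv; have [tuv _] := andP duv.
case: (edge_del_or c x tuv) => [d'|/orP[]/andP[/eqP uc /eqP vx]].
- by move: Hcu; rewrite (side_stepV Hcv d').
- by move: Hcu; rewrite uc side_self.
- by move: Hdu; rewrite uc (negbTE xd).
Qed.

Lemma side_root x : side x x = setT.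
Proof.
apply/setP => y; rewrite !inE (@eq_connect _ _ t) ?tree_connect //.
move=> u v; rewrite del_edgeE /is_edge orbb.
by case: (eqVneq u x) => [->|] /=; case: (eqVneq v x) => [->|]; rewrite ?tree_irr ?andbT.
Qed.

Lemma side_setC a b : t a b -> side b a = ~: side a b.
Proof.
move=> tab; apply/setP => y; rewrite in_setC.
have sym := del_edge_sym a b tree_sym.
have cover : (y \in side a b) || (y \in side b a).
  apply: (connect_ind (P := fun y => (y \in side a b) || (y \in side b a)) (tree_connect a y)); first by rewrite side_self.
  move=> u v tuv Hu; case: (edge_del_or a b tuv) => [d|/orP[]/andP[_ /eqP ->]];
    rewrite ?side_self ?orbT //.
  case/orP: Hu => H; first by rewrite (side_step H d).
  by rewrite (side_step H (_ : del_edge t b a u v)) ?orbT // -del_edgeC.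
apply/idP/idP => [Hb|]; last by move=> Ha; rewrite (negbTE Ha) in cover.
apply/negP; rewrite !inE in Hb * => Ha; have := notin_side tab; rewrite inE.
apply/negP/negPn; apply: connect_trans Ha _.
by rewrite (sym_connect_sym sym) (eq_connect (del_edgeC t a b)).
Qed.

Lemma side_leaf a b : degree t a <= 1 -> t a b -> side a b = [set a].
Proof.
move=> dg tab; apply/setP => y; rewrite inE; apply/idP/idP; last first.
  by move/eqP->; apply: side_self.
rewrite inE => Hy; apply: (connect_ind (P := fun y => y == a) Hy) => // u v + /eqP ua; rewrite {}ua.
rewrite del_edgeE /is_edge eqxx /= => /andP[tav].
case: (eqVneq v b) => [// | vb _].
have : [set b; v] \subset [set y | t a y].
  by apply/subsetP => z; rewrite !inE => /orP[]/eqP->.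
by move/subset_leq_card; rewrite cards2 eq_sym vb => /leq_trans/(_ dg).
Qed.

End Tree.

Lemma in_induced_cut (V N : finType) (t : rel N) (f : V -> N) a b v :
  (v \in induced_cut t f a b) = (f v \in side t a b).
Proof. by rewrite !inE. Qed.

Section CutCover.
Variables (V : finType) (E : rel V).

Definition cut_cover (A C : {set V}) :=
  forall u w, u \in A -> w \notin A -> E u w -> (u \in C) || (w \in C).

Lemma mm_le_cover A C : cut_cover A C -> mm E A <= #|C|.
Proof.
move=> HC; apply/bigmax_leqP => M /andP[/forallP M_cut /forallP M_match].
pose end_in_C (p : V * V) := if p.1 \in C then p.1 else p.2.
have inj : {in M &, injective end_in_C}.
  move=> p q pM qM; move: (M_match p); rewrite pM /= => /forallP /(_ q); rewrite qM /=.
  move: (M_cut p) (M_cut q); rewrite pM qM /= => /and3P[p1 p2 _] /and3P[q1 q2 _] Hpq.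
  rewrite /end_in_C; case: (p.1 \in C); case: (q.1 \in C) => E0; apply/eqP; apply: (implyP Hpq).
  - by rewrite E0 eqxx.
  - by move: p1; rewrite E0 (negbTE q2).
  - by move: q1; rewrite -E0 (negbTE p2).
  - by rewrite E0 eqxx orbT.
rewrite -(card_in_imset inj); apply/subset_leq_card/subsetP => z /imsetP[p pM ->].
move: (M_cut p); rewrite pM /= => /and3P[p1 p2 pE]; rewrite /end_in_C.
by case: ifP => // /negbT pC; move: (HC _ _ p1 p2 pE); rewrite (negbTE pC).
Qed.

Lemma cut_cover_setC A C : symmetric E -> cut_cover A C -> cut_cover (~: A) C.
Proof.
move=> Es HC u w; rewrite !inE negbK => uA wA Euw.
by rewrite orbC; apply: HC => //; rewrite Es.
Qed.

Lemma sm_le_cover A C n : cut_cover A C -> #|C| <= n.+1 -> sm E A <= n.+1.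
Proof. by move=> HC Cn; rewrite /sm; case: ifP => // _; apply: leq_trans (mm_le_cover HC) Cn. Qed.

End CutCover.

Section BinaryTree.
Variable V : finType.

Inductive btree := BLeaf of V | BNode of btree & btree.

Fixpoint leaves B :=
  match B with BLeaf v => [:: v] | BNode l r => leaves l ++ leaves r end.

Fixpoint height B :=
  match B with BLeaf _ => 0 | BNode l r => (maxn (height l) (height r)).+1 end.

Definition child (b : bool) B : option btree :=
  if B is BNode l r then Some (if b then r else l) else None.

(* Addresses are read from the end: the parent of the address [b :: s] is [s]. *)
Fixpoint subtree B (s : seq bool) : option btree :=
  if s is b :: s' then obind (child b) (subtree B s') else Some B.

Fixpoint bool_seqs n : seq (seq bool) :=
  if n is n'.+1 then [::] :: map (cons false) (bool_seqs n') ++ map (cons true) (bool_seqs n')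
  else [:: [::]].

Definition addrs B := [seq s <- bool_seqs (height B) | isSome (subtree B s)].

Lemma subtree_cat B s s' : subtree B (s ++ s') = obind (subtree^~ s) (subtree B s').
Proof. by elim: s => [|b s IH] /=; [case: subtree | rewrite IH; case: subtree]. Qed.

Lemma subtree_height B s T : subtree B s = Some T -> size s + height T <= height B.
Proof.
elim: s T => [|b s IH] T /=; first by case=> ->.
case Es: (subtree B s) => [[|l r]|] //= [<-].
apply: leq_trans (IH _ Es); rewrite addSnnS leq_add2l /=.
by case: b; rewrite ltnS ?leq_maxr ?leq_maxl.
Qed.

Lemma mem_bool_seqs n s : (s \in bool_seqs n) = (size s <= n).
Proof.
have mem_cons (c d : bool) u A : (c :: u \in map (cons d) A) = (c == d) && (u \in A).
  by apply/mapP/andP => [[u' Hu' [-> ->]]|[/eqP -> Hu]]; [rewrite eqxx | exists u].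
elim: n s => [|n IH] [|b s] //=.
by rewrite in_cons /= ltnS -IH mem_cat !mem_cons; case: b; rewrite /= ?orbF.
Qed.

Lemma mem_addrs B s : (s \in addrs B) = isSome (subtree B s).
Proof.
rewrite mem_filter mem_bool_seqs; case Es: (subtree B s) => [T|] //=.
by apply: leq_trans (leq_addr _ _) (subtree_height Es).
Qed.

Lemma addrs_behead B s : s \in addrs B -> behead s \in addrs B.
Proof. by rewrite !mem_addrs; case: s => //= b s; case: subtree. Qed.

Lemma subtree_leaf u s T : subtree (BLeaf u) s = Some T -> s = [::].
Proof.
elim: s T => [//|b s IH] T /=; case Es: (subtree (BLeaf u) s) => [T'|] //=.
by move: (Es); rewrite (IH _ Es) => -[<-].
Qed.

Lemma subtree_leaves T s T' : subtree T s = Some T' -> {subset leaves T' <= leaves T}.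
Proof.
elim: s T' => [|b s IH] T' /=; first by case=> ->.
case Es: (subtree T s) => [[u|l r]|] //= [<-] x Hx; apply: (IH _ Es) => /=.
by rewrite mem_cat; case: b Hx => ->; rewrite ?orbT.
Qed.

Lemma leaf_addr T v : v \in leaves T -> exists s, subtree T s = Some (BLeaf v).
Proof.
elim: T => [u|l IHl r IHr] /=; first by rewrite inE => /eqP->; exists [::].
rewrite mem_cat => /orP[/IHl|/IHr] [s Hs].
- by exists (s ++ [:: false]); rewrite subtree_cat.
- by exists (s ++ [:: true]); rewrite subtree_cat.
Qed.

Lemma leaf_addr_uniq T s s' v : uniq (leaves T) -> subtree T s = Some (BLeaf v) ->
  subtree T s' = Some (BLeaf v) -> s = s'.
Proof.
elim: T s s' => [u|l IHl r IHr] s s' /=.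
  by move=> _ /subtree_leaf -> /subtree_leaf ->.
rewrite cat_uniq => /and3P[Ul /hasPn lr Ur].
case/lastP: s => [//|s b]; case/lastP: s' => [//|s' b'].
rewrite -!cats1 !subtree_cat /=.
have leaf_in T'' w : subtree T'' w = Some (BLeaf v) -> v \in leaves T''.
  by move/subtree_leaves; apply; rewrite inE.
case: b; case: b' => /= H1 H2.
- by rewrite (IHr _ _ Ur H1 H2).
- by move: (lr v (leaf_in _ _ H1)); rewrite (leaf_in _ _ H2).
- by move: (lr v (leaf_in _ _ H2)); rewrite (leaf_in _ _ H1).
- by rewrite (IHl _ _ Ul H1 H2).
Qed.

End BinaryTree.

Section BinaryTreeDecomposition.
Variables (V : finType) (B : btree V).

Definition bt_node : finType := seq_sub (addrs B).

Definition bt_child (y x : bt_node) := (behead (val y) == val x) && (val y != [::]).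
Definition bt_edge : rel bt_node := fun x y => bt_child y x || bt_child x y.

Lemma nil_addr : [::] \in addrs B. Proof. by rewrite mem_addrs. Qed.

Definition bt_root : bt_node := SeqSub nil_addr.
Definition bt_parent (x : bt_node) : bt_node := SeqSub (addrs_behead (ssvalP x)).

Lemma bt_edge_sym : symmetric bt_edge. Proof. by move=> x y; rewrite /bt_edge orbC. Qed.

Lemma bt_edge_irr : irreflexive bt_edge.
Proof.
move=> x; rewrite /bt_edge orbb /bt_child; case: (val x) => //= b s.
by apply/negP => /andP[/eqP/(f_equal size)/= /n_Sn].
Qed.

Lemma bt_connect_root x : connect bt_edge x bt_root.
Proof.
move: {2}(size (val x)) (erefl (size (val x))) => n; elim: n x => [|n IH] x Hs.
  by case: x Hs => [[|//] Hx] _; apply: eq_connect0; apply: val_inj.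
apply: (@connect_trans _ _ (bt_parent x)); last first.
  by apply: IH; rewrite /= size_behead Hs.
apply/connect1/orP; right; rewrite /bt_child eqxx /=.
by apply/eqP => x0; move: Hs; rewrite -[val x]/(ssval x) x0.
Qed.

Lemma cons_behead (s : seq bool) : s != [::] -> s = head false s :: behead s.
Proof. by case: s. Qed.

Lemma bt_suffix_of_child (x y z : bt_node) : bt_child y x ->
  connect (del_edge bt_edge x y) y z -> exists w, val z = w ++ val y.
Proof.
move=> yx Hz; apply: (connect_ind (P := fun z : bt_node => exists w, val z = w ++ val y) Hz).
  by exists [::].
move=> u v /andP[euv not_xy] [w Hu].
case/orP: euv => /andP[/eqP Hb Hne].
- by exists (head false (val v) :: w); rewrite /= -Hu -Hb; apply: cons_behead.
- case: w Hu => [|c w] Hu; last by exists w; rewrite -Hb Hu.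
  have uy : u = y by apply: val_inj.
  have vx : v = x by apply: val_inj; rewrite -Hb Hu; case/andP: yx => /eqP.
  by move: not_xy; rewrite uy vx !eqxx orbT.
Qed.

Lemma bt_edge_bridge a b : bt_edge a b -> ~~ connect (del_edge bt_edge a b) a b.
Proof.
have no_loop x y : bt_child y x -> ~~ connect (del_edge bt_edge x y) y x.
  move=> yx; apply/negP => /(bt_suffix_of_child yx) [w /(f_equal size)].
  case/andP: yx => /eqP/(f_equal size); rewrite size_cat size_behead.
  by case: (val y) => //= _ s <- _; lia.
case/orP => [ba|ab]; apply/negP => H.
- move/negP: (no_loop _ _ ba); apply.
  by rewrite (sym_connect_sym (del_edge_sym _ _ bt_edge_sym)).
- by move/negP: (no_loop _ _ ab); apply; rewrite (eq_connect (del_edgeC _ b a)).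
Qed.

Lemma bt_tree : is_tree bt_edge.
Proof.
split; [by apply/card_gt0P; exists bt_root | split; [exact: bt_edge_sym | exact: bt_edge_irr]
       | move=> x y | exact: bt_edge_bridge]. apply: connect_trans (bt_connect_root x) _.
by rewrite (sym_connect_sym bt_edge_sym); apply: bt_connect_root.
Qed.

Lemma bt_sideP (x y z : bt_node) : bt_child y x ->
  reflect (exists w, val z = w ++ val y) (z \in side bt_edge y x).
Proof.
move=> yx; apply: (iffP idP).
  by rewrite inE (eq_connect (del_edgeC _ y x)); apply: bt_suffix_of_child.
case=> w; elim: w z => [|c w IH] z Hz.
  by rewrite (_ : z = y) ?side_self //; apply: val_inj.
have zp : w ++ val y \in addrs B by have := addrs_behead (ssvalP z); rewrite [ssval z]Hz.
apply: side_step (IH (SeqSub zp) erefl) _.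
have size_y : size (val y) = (size (val x)).+1.
  by case/andP: yx => /eqP <- ; case: (val y).
have size_z : size (val z) = (size w + (size (val x)).+1).+1.
  by rewrite Hz /= size_cat size_y.
rewrite del_edgeE /bt_edge /bt_child /= Hz /= eqxx /=.
by apply/negP => /orP[]/andP[_ /eqP zxy]; move: size_z size_y; rewrite zxy; lia.
Qed.

Hypothesis leaves_uniq : uniq (leaves B).
Hypothesis leaves_all : forall v, v \in leaves B.

Definition leaf_at (s : seq bool) (v : V) : bool :=
  if subtree B s is Some (BLeaf u) then u == v else false.

Lemma leaf_atP s v : reflect (subtree B s = Some (BLeaf v)) (leaf_at s v).
Proof.
rewrite /leaf_at; case: subtree => [[u|l r]|]; last 2 first; try by constructor.
by apply: (iffP eqP) => [->|[]].
Qed.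

Definition bt_leaf (v : V) : bt_node := odflt bt_root [pick z : bt_node | leaf_at (val z) v].

Lemma bt_leafE v : subtree B (val (bt_leaf v)) = Some (BLeaf v).
Proof.
rewrite /bt_leaf; case: pickP => [z /leaf_atP // | none].
have [s Hs] := leaf_addr (leaves_all v).
have sB : s \in addrs B by rewrite mem_addrs Hs.
by move: (none (SeqSub sB)); rewrite /= /leaf_at Hs eqxx.
Qed.

Lemma bt_leaf_inj : injective bt_leaf.
Proof. by move=> v w Evw; have := bt_leafE v; rewrite Evw bt_leafE => -[]. Qed.

Definition bt_subtree (z : bt_node) : btree V := odflt B (subtree B (val z)).

Lemma bt_subtreeE z : subtree B (val z) = Some (bt_subtree z).
Proof. by rewrite /bt_subtree; move: (ssvalP z); rewrite mem_addrs; case: subtree. Qed.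

Lemma card_le_vals (A : {set bt_node}) (l : seq (seq bool)) :
  (forall y, y \in A -> val y \in l) -> #|A| <= size l.
Proof.
move=> Al; rewrite cardE -(size_map val); apply: uniq_leq_size.
  by rewrite map_inj_uniq ?enum_uniq //; apply: val_inj.
by move=> s /mapP[y]; rewrite mem_enum => /Al + ->.
Qed.

Lemma bt_degree x : degree bt_edge x <= 3.
Proof.
apply: (@card_le_vals _ [:: behead (val x); false :: val x; true :: val x]) => y.
rewrite inE /bt_edge /bt_child => /orP[]/andP[/eqP Hb Hne].
- by rewrite (cons_behead Hne) Hb !inE; case: (head false (val y)); rewrite eqxx ?orbT.
- by rewrite -Hb inE eqxx.
Qed.

Lemma bt_is_leaf x : is_leaf bt_edge x <-> exists v, bt_leaf v = x.
Proof.
split; last first.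
  move=> [v <-]; rewrite /is_leaf /degree.
  apply: (@card_le_vals _ [:: behead (val (bt_leaf v))]) => y.
  rewrite inE /bt_edge /bt_child => /orP[]/andP[/eqP Hb Hne]; last by rewrite -Hb inE.
  by have := bt_subtreeE y; rewrite (cons_behead Hne) Hb /= bt_leafE.
rewrite /is_leaf; case Ex: (bt_subtree x) (bt_subtreeE x) => [v|l r] Hx.
  by exists v; apply/val_inj/(leaf_addr_uniq leaves_uniq (bt_leafE v) Hx).
have child_node b : b :: val x \in addrs B by rewrite mem_addrs /= Hx.
pose y b := SeqSub (child_node b).
have : [set y false; y true] \subset [set z | bt_edge x z].
  by apply/subsetP => z; rewrite !inE => /orP[]/eqP->; rewrite /bt_edge /bt_child /= eqxx.
move/subset_leq_card; rewrite cards2 (_ : y false != y true) //.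
by move=> /leq_trans H /H.
Qed.

Lemma bt_cut_child (x y : bt_node) : bt_child y x ->
  induced_cut bt_edge bt_leaf y x = [set v | v \in leaves (bt_subtree y)].
Proof.
move=> yx; apply/setP => v; rewrite in_induced_cut inE.
apply/(bt_sideP _ yx)/idP => [[w Hw] | /leaf_addr [w Hw]].
  have := bt_leafE v; rewrite Hw subtree_cat bt_subtreeE /= => /subtree_leaves; apply.
  by rewrite inE.
exists w; apply: (leaf_addr_uniq leaves_uniq (bt_leafE v)).
by rewrite subtree_cat bt_subtreeE.
Qed.

Lemma bt_cut_parent (x y : bt_node) : bt_child y x ->
  induced_cut bt_edge bt_leaf x y = ~: [set v | v \in leaves (bt_subtree y)].
Proof.
move=> yx; rewrite -(bt_cut_child yx); apply/setP => v.
by rewrite in_setC !in_induced_cut (side_setC bt_tree) ?inE // /bt_edge yx orbT.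
Qed.

End BinaryTreeDecomposition.

Section CoverableTrees.
Variables (V : finType) (E : rel V) (k : nat).

Definition coverable (S : {set V}) := exists2 C : {set V}, #|C| <= k.+1 & cut_cover E S C.

Definition bt_coverable (B : btree V) :=
  forall s T, subtree B s = Some T -> coverable [set v | v \in leaves T].

Lemma bt_branch_decomposition (B : btree V) :
  symmetric E -> uniq (leaves B) -> (forall v, v \in leaves B) -> bt_coverable B ->
  branch_decomposition (@bt_edge _ B) (@bt_leaf _ B) /\
  bd_smwidth E (@bt_edge _ B) (@bt_leaf _ B) <= k.+1.
Proof.
move=> Esym Buniq Ball Bcov; split.
  split; [exact: bt_tree | exact: bt_degree | exact: bt_leaf_inj | exact: bt_is_leaf].
apply/bigmax_leqP => [[x y]] /= /orP[yx|xy].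
- have [C Ck HC] := Bcov _ _ (bt_subtreeE y).
  by rewrite (bt_cut_parent Buniq Ball yx); apply: sm_le_cover (cut_cover_setC Esym HC) Ck.
- have [C Ck HC] := Bcov _ _ (bt_subtreeE x).
  by rewrite (bt_cut_child Buniq Ball xy); apply: sm_le_cover HC Ck.
Qed.

Definition bt_spanned (S : {set V}) :=
  S = set0 \/ exists2 B, uniq (leaves B) /\ leaves B =i S & bt_coverable B.

Lemma bt_spanned1 v : bt_spanned [set v].
Proof.
right; exists (BLeaf v); first by split => // w; rewrite !inE.
move=> s T /[dup] /subtree_leaf -> [<-] /=; exists [set v]; first by rewrite cards1.
by move=> u w; rewrite !inE => /eqP -> _ _; rewrite eqxx.
Qed.

Lemma bt_spannedU (S1 S2 : {set V}) : [disjoint S1 & S2] ->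
  bt_spanned S1 -> bt_spanned S2 -> coverable (S1 :|: S2) -> bt_spanned (S1 :|: S2).
Proof.
move=> S12 [->|[B1 [U1 L1] G1]]; first by rewrite set0U.
move=> [->|[B2 [U2 L2] G2]] cov12; first by rewrite setU0; right; exists B1.
right; exists (BNode B1 B2).
  split=> [|v]; last by rewrite /= mem_cat L1 L2 inE.
  rewrite /= cat_uniq U1 U2 andbT; apply/hasPn => v; rewrite L2 L1 => v2.
  by apply: contraTN S12 => v1; apply/pred0Pn; exists v; rewrite /= v1.
move=> s T; case/lastP: s => [[<-]|s b]; last first.
  by rewrite -cats1 subtree_cat; case: b; [apply: G2 | apply: G1].
by rewrite (_ : [set v | _] = S1 :|: S2) //; apply/setP => v; rewrite !inE /= mem_cat L1 L2.
Qed.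

Lemma bt_spanned_bigcup (I : eqType) (r : seq I) (S : I -> {set V}) : uniq r ->
  (forall i, bt_spanned (S i)) ->
  (forall i j, i != j -> [disjoint S i & S j]) ->
  (forall r', coverable (\bigcup_(i <- r') S i)) -> bt_spanned (\bigcup_(i <- r) S i).
Proof.
move=> + Sspan Sdisj Scov; elim: r => [_|i r IH /andP[ir Ur]]; first by rewrite big_nil; left.
rewrite big_cons; apply: bt_spannedU (Sspan i) (IH Ur) _; last by have := Scov (i :: r); rewrite big_cons.
rewrite -setI_eq0 big_distrr /=; apply/eqP/big1_seq => j /andP[_ jr].
by apply/eqP; rewrite setI_eq0 Sdisj //; apply: contraNneq ir => ->.
Qed.

End CoverableTrees.

Section FromTreeDecomposition.
Variables (V : finType) (E : rel V) (k : nat).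
Variables (N : finType) (t : rel N) (bag : N -> {set V}).
Hypothesis td : tree_decomposition E t bag k.
Variable x0 : N.

Lemma td_tree : is_tree t. Proof. by case: td. Qed.

Definition home v := odflt x0 [pick x | v \in bag x].

Lemma home_bag v : v \in bag (home v).
Proof.
rewrite /home; case: pickP => [//|none]; case: td => _ /(_ v) [x vx] _ _ _.
by move: (none x); rewrite vx.
Qed.

Lemma side_bags_connected c x v z z' : z \in side t c x -> v \notin bag x ->
  v \in bag z -> v \in bag z' -> z' \in side t c x.
Proof.
move=> Hz vx vz vz'; case: td => _ _ _ /(_ v z z' vz vz') path _.
apply: (connect_ind (P := fun y => y \in side t c x) path) => // a b.
move=> /andP[/andP[tab va] vb] Ha; apply: (side_step Ha).
rewrite del_edgeE tab; apply/negP => /orP[]/andP[/eqP e1 /eqP e2].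
- by move: vb; rewrite e2 (negbTE vx).
- by move: va; rewrite e1 (negbTE vx).
Qed.

Definition side_vertices x p := [set v | home v \in side t x p].

Lemma in_side_vertices v x p : (v \in side_vertices x p) = (home v \in side t x p).
Proof. by rewrite [LHS]inE. Qed.

(* The binary tree spanning [side_vertices x p] is assembled from these blocks one at
   a time; every partial union has its boundary covered by [bag x]. *)
Definition side_block x p (i : V + N) : {set V} :=
  match i with
  | inl v => if home v == x then [set v] else set0
  | inr c => if t x c && (c != p) then side_vertices c x else set0
  end.

Lemma side_blocks_coverable x p r :
  coverable E k (\bigcup_(i <- r) side_block x p i).
Proof.
(* An edge leaving the union with both ends outside [bag x] starts in the side of some
   neighbour [c]; the connectivity of bags keeps the other end in that side. *)
exists (bag x); first by case: td => _ _ _ _ /(_ x).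
move=> u w; rewrite bigcup_seq => /bigcupP[i ir ui] wU Euw.
case: (boolP (u \in bag x)) => //= ux; case: (boolP (w \in bag x)) => //= wx; exfalso.
case: i ir ui => [v|c] ir /=.
  case: ifP => [/eqP hx|]; last by rewrite inE.
  by rewrite inE => /eqP uv; move: ux; rewrite uv -hx home_bag.
case: ifP => [/andP[txc cp]|]; last by rewrite inE.
rewrite in_side_vertices => Hu.
case: td => _ _ /(_ u w Euw) [y /andP[uy wy]] _ _.
have Hy := side_bags_connected Hu ux (home_bag u) uy.
have Hw := side_bags_connected Hy wx wy (home_bag w).
move/negP: wU; apply; apply/bigcupP; exists (inr c) => //=.
by rewrite txc cp in_side_vertices.
Qed.

Lemma side_vertices_blocks x p :
  side_vertices x p = \bigcup_(i <- enum [set: V + N]) side_block x p i.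
Proof.
apply/setP => v; rewrite bigcup_seq; apply/idP/bigcupP.
- rewrite in_side_vertices => /(sideP td_tree) [hx|[c /andP[txc cp] Hc]].
    by exists (inl v); rewrite ?mem_enum ?inE //= hx eqxx inE.
  by exists (inr c); rewrite ?mem_enum ?inE //= txc cp in_side_vertices.
- move=> [[w|c] _ /=].
    case: ifP => [/eqP hx|]; last by rewrite inE.
    by rewrite in_set1 => /eqP ->; rewrite in_side_vertices hx side_self.
  case: ifP => [/andP[txc cp]|]; last by rewrite inE.
  by rewrite !in_side_vertices; apply: (subsetP (side_sub td_tree txc cp)).
Qed.

Lemma in_side_block_inl x p u v : u \in side_block x p (inl v) -> u = v /\ home u = x.
Proof. by rewrite /=; case: ifP => [/eqP hx|]; rewrite ?inE // => /eqP ->. Qed.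

Lemma in_side_block_inr x p u c : u \in side_block x p (inr c) ->
  [/\ t x c, c != p & home u \in side t c x].
Proof. by rewrite /=; case: ifP => [/andP[txc cp]|]; rewrite ?in_side_vertices ?inE. Qed.

Lemma side_blocks_disjoint x p i j : i != j ->
  [disjoint side_block x p i & side_block x p j].
Proof.
have notin_child u c : t x c -> home u \in side t c x -> home u != x.
  move=> txc; apply: contraTneq => ->.
  by apply: (notin_side td_tree); rewrite (tree_sym td_tree).
move=> ij; apply/pred0P => u /=; apply/negbTE/negP => /andP[].
case: i j ij => [v|c] [w|d] ij.
- by move=> /in_side_block_inl[-> _] /in_side_block_inl[vw _]; rewrite vw eqxx in ij.
- move=> /in_side_block_inl[_ hx] /in_side_block_inr[txd _ Hd].
  by move: (notin_child u d txd Hd); rewrite hx eqxx.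
- move=> /in_side_block_inr[txc _ Hc] /in_side_block_inl[_ hx].
  by move: (notin_child u c txc Hc); rewrite hx eqxx.
- move=> /in_side_block_inr[txc _ Hc] /in_side_block_inr[txd _ Hd].
  have cd : c != d by apply: contraNneq ij => ->.
  by move: (side_disj td_tree txc txd cd Hc); rewrite Hd.
Qed.

Lemma side_vertices_spanned x p : bt_spanned E k (side_vertices x p).
Proof.
move: {2}#|side t x p| (leqnn #|side t x p|) => n; elim: n x p => [|n IH] x p Hn.
  by move: Hn; rewrite leqn0 cards_eq0 => /eqP side0; move: (side_self t x p); rewrite side0 inE.
rewrite side_vertices_blocks; apply: bt_spanned_bigcup.
- exact: enum_uniq.
- case=> [v|c] /=; first by case: ifP => _; [apply: bt_spanned1 | left].
  case: ifP => [/andP[txc cp]|_]; last by left.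
  by apply: IH; rewrite -ltnS; apply: leq_trans Hn; apply: (side_lt td_tree txc cp).
- exact: side_blocks_disjoint.
- exact: side_blocks_coverable.
Qed.

End FromTreeDecomposition.

Theorem smw_le_tw (V : finType) (E : rel V) (k : nat) :
  is_graph E -> tw_le E k -> smw_le E k.+1.
Proof.
move=> [Esym _] [N [t [bag td]]].
have [V0|] := posnP #|V|; [by left | case/card_gt0P => v0 _; right].
have [x0 _] : exists x, v0 \in bag x by case: td => _ /(_ v0).
case: (side_vertices_spanned td x0 x0 x0) => [S0 | [B [Buniq BV] Bcov]].
  by move: S0 => /setP /(_ v0); rewrite in_side_vertices side_root ?inE //; apply: td_tree td.
exists (bt_node B), (@bt_edge _ B), (@bt_leaf _ B).
apply: bt_branch_decomposition => // v.
by rewrite BV in_side_vertices side_root ?inE //; apply: td_tree td.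
Qed.

Section KExpressions.
Variable c : nat.

Lemma k_expr_ext (T : finType) (E E' : rel T) (l l' : T -> 'I_c) :
  k_expr E l -> E' =2 E -> l' =1 l -> k_expr E' l'.
Proof. by move=> El EE' ll'; apply: (@ke_iso c T T E l E' l' id) => //; exists id. Qed.

Lemma k_expr_card0 (T : finType) (E : rel T) (l : T -> 'I_c) : #|T| = 0 -> k_expr E l.
Proof.
move=> T0; have g_bij : bijective (fun v : void => of_void T v).
  by apply: inj_card_bij; [case | rewrite card_void T0].
by apply: (ke_iso (ke_empty (fun v : void => of_void 'I_c v)) g_bij); case.
Qed.

Lemma k_expr_relabel_seq (T : finType) (E : rel T) (l : T -> 'I_c)
    (g : 'I_c -> 'I_c) (s : seq 'I_c) :
  k_expr E l -> (forall i, i \in s -> g i \notin s) ->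
  k_expr E (fun x => if l x \in s then g (l x) else l x).
Proof.
elim: s l => [|i s IH] l El gs; first by apply: k_expr_ext El _ _.
have gs' j : j \in s -> g j \notin s.
  by move=> js; have := gs j; rewrite inE js orbT inE => /(_ isT) /norP[].
have gi : g i \notin i :: s by apply: gs; rewrite mem_head.
apply: k_expr_ext (IH _ (ke_relabel i (g i) El) gs') _ _ => // x /=.
case: (eqVneq (l x) i) => [->|lxi]; last by rewrite inE (negbTE lxi).
by move: gi; rewrite mem_head inE negb_or => /andP[_ /negbTE ->].
Qed.

Definition join_rel (T : finType) (E : rel T) (l : T -> 'I_c) (ps : seq ('I_c * 'I_c)) : rel T :=
  fun x y => E x y ||
    has (fun p => (l x == p.1) && (l y == p.2) || (l x == p.2) && (l y == p.1)) ps.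

Lemma k_expr_join_seq (T : finType) (E : rel T) (l : T -> 'I_c) ps :
  k_expr E l -> (forall p, p \in ps -> p.1 != p.2) -> k_expr (join_rel E l ps) l.
Proof.
elim: ps E => [|p ps IH] E El ps_ne.
  by apply: k_expr_ext El _ _ => // x y; rewrite /join_rel orbF.
have El' := ke_join El (ps_ne p (mem_head _ _)).
apply: k_expr_ext (IH _ El' _) _ _ => [q qs|x y|//]; first by apply: ps_ne; rewrite inE qs orbT.
by rewrite /join_rel /= !orbA.
Qed.

End KExpressions.

Section NeighbourhoodClasses.
Variables (V : finType) (E : rel V).

Definition out_nbh (A : {set V}) x : {set V} := [set z | E x z & z \notin A].
Definition nbh_classes (A : {set V}) := [set out_nbh A x | x in A].

Definition induced (A : {set V}) : rel {x : V | x \in A} := fun x y => E (val x) (val y).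

(* The invariant built along a branch decomposition: [G[A]] with any labelling by
   neighbourhood class across the cut is generated by a [c]-expression. *)
Definition class_expressible (c : nat) (A : {set V}) :=
  forall l : {x : V | x \in A} -> 'I_c,
    (forall x y, out_nbh A (val x) = out_nbh A (val y) -> l x = l y) ->
    k_expr (@induced A) l.

Lemma class_expressible0 c : class_expressible c set0.
Proof.
move=> l _; apply: k_expr_card0.
by rewrite card_sig; apply: eq_card0 => x; rewrite !inE.
Qed.

Lemma class_expressible1 c v : irreflexive E -> class_expressible c [set v].
Proof.
move=> Eirr l _; have vv : v \in [set v] by rewrite inE.
pose g (_ : unit) : {x : V | x \in [set v]} := exist _ v vv.
have g_bij : bijective g.
  by apply: inj_card_bij; [case; case | rewrite card_unit card_sig cards1].
by apply: (ke_iso (ke_vertex (l (g tt))) g_bij) => [[] []|[]]; rewrite /induced /= ?Eirr.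
Qed.

Lemma out_nbh_split A x y : is_split E A -> x \in A -> y \in A ->
  out_nbh A x != set0 -> out_nbh A y != set0 -> out_nbh A x = out_nbh A y.
Proof.
move=> /and3P[_ _ /forallP split] xA yA nx ny.
have out_edge w : out_nbh A w != set0 -> [exists z in ~: A, E w z].
  by case/set0Pn => z; rewrite inE => /andP[wz zA]; apply/existsP; exists z; rewrite inE zA.
have /forallP xy := implyP (implyP ((forallP (implyP (split x) xA)) y) yA)
  (introT andP (conj (out_edge _ nx) (out_edge _ ny))).
apply/setP => z; rewrite !inE; case: (boolP (z \in A)) => zA; rewrite ?andbF //= !andbT.
by apply/eqP; move: (xy z); rewrite inE zA.
Qed.

Lemma card_nbh_classes_split A : is_split E A -> #|nbh_classes A| <= 2.
Proof.
move=> Asplit.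
case: (pickP [pred x | (x \in A) && (out_nbh A x != set0)]) => [x0 /andP[x0A nx0]|none].
  apply: leq_trans (_ : #|[set set0; out_nbh A x0]| <= 2); last by rewrite cards2; case: (_ != _).
  apply/subset_leq_card/subsetP => S /imsetP[y yA ->]; rewrite !inE.
  by case: (eqVneq (out_nbh A y) set0) => //= ny; apply/eqP/out_nbh_split.
apply: leq_trans (_ : #|[set (set0 : {set V})]| <= 2); last by rewrite cards1.
apply/subset_leq_card/subsetP => S /imsetP[y yA ->]; rewrite !inE.
by move: (none y); rewrite /= yA => /negbFE.
Qed.

Lemma max_cut_matching_cover A : exists S1 S2 : {set V},
  [/\ #|S1| <= mm E A, #|S2| <= mm E A &
      forall x z, x \in A -> z \notin A -> E x z -> (x \in S1) || (z \in S2)].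
Proof.
have M0 : cut_matching E A set0 by apply/andP; split; apply/forallP => p; rewrite inE.
case: (arg_maxnP (fun M : {set V * V} => #|M|) M0) => M /andP[/forallP M_cut /forallP M_match] M_max.
have Mmm : #|M| <= mm E A by apply: leq_bigmax_cond; apply/andP; split; apply/forallP.
exists [set p.1 | p in M], [set p.2 | p in M].
split; [exact: leq_trans (leq_imset_card _ _) Mmm | exact: leq_trans (leq_imset_card _ _) Mmm |].
move=> x z xA zA Exz; apply/negPn/negP => /norP[xS1 zS2].
have xzM : (x, z) \notin M by apply: contra xS1 => /(imset_f (fun p : V * V => p.1)).
have Mxz : cut_matching E A ((x, z) |: M).
  apply/andP; split; apply/forallP => p; rewrite !inE.
    by apply/implyP => /orP[/eqP->|pM]; [rewrite /= xA zA Exz | move: (M_cut p); rewrite pM].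
  apply/implyP => Hp; apply/forallP => q; rewrite !inE; apply/implyP => Hq.
  have fresh u : u \in M -> (x == u.1) || (z == u.2) = false.
    move=> uM; apply/negbTE/norP; split; apply/eqP => e.
    - by move: xS1; rewrite e (imset_f (fun p : V * V => p.1) uM).
    - by move: zS2; rewrite e (imset_f (fun p : V * V => p.2) uM).
  case/orP: Hp => [/eqP->|pM]; case/orP: Hq => [/eqP->|qM]; rewrite ?eqxx //=.
  - by rewrite fresh.
  - by rewrite [p.1 == _]eq_sym [p.2 == _]eq_sym fresh.
  - by move: (M_match p); rewrite pM => /forallP /(_ q); rewrite qM.
by have := M_max _ Mxz; rewrite cardsU1 xzM add1n /= ltnn.
Qed.

Lemma card_nbh_classes_mm A : #|nbh_classes A| <= 2 ^ mm E A + mm E A.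
Proof.
have [S1 [S2 [S1mm S2mm S12]]] := max_cut_matching_cover A.
apply: leq_trans (_ : #|powerset S2 :|: [set out_nbh A y | y in S1]| <= _).
  apply/subset_leq_card/subsetP => S /imsetP[y yA ->]; rewrite inE.
  case: (boolP (y \in S1)) => yS1; first by rewrite (imset_f (out_nbh A) yS1) orbT.
  rewrite inE; apply/orP; left; apply/subsetP => z; rewrite inE => /andP[Eyz zA].
  by move: (S12 y z yA zA Eyz); rewrite (negbTE yS1).
apply: leq_trans (leq_card_setU _ _) _; rewrite card_powerset leq_add //.
  exact: leq_pexp2l.
exact: leq_trans (leq_imset_card _ _) S1mm.
Qed.

Lemma card_nbh_classes A k : sm E A <= k -> #|nbh_classes A| <= 2 ^ k + k + 2.
Proof.
rewrite /sm; case: ifP => [Asplit _ | _ Ak].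
  by apply: leq_trans (card_nbh_classes_split Asplit) _; rewrite leq_addl.
apply: leq_trans (card_nbh_classes_mm A) _; rewrite -addnA leq_add ?leq_pexp2l //.
by apply: leq_trans Ak _; rewrite leq_addr.
Qed.

Lemma card_nbh_classesT : #|nbh_classes setT| <= 1.
Proof.
rewrite -(cards1 (set0 : {set V})); apply/subset_leq_card/subsetP => S /imsetP[x _ ->].
by rewrite inE; apply/eqP/setP => z; rewrite !inE andbF.
Qed.

Definition class_index (A : {set V}) x := index (out_nbh A x) (enum (nbh_classes A)).

Lemma class_index_lt (A : {set V}) x : x \in A -> class_index A x < #|nbh_classes A|.
Proof. by move=> xA; rewrite cardE index_mem mem_enum imset_f. Qed.

Lemma class_index_inj (A : {set V}) x y : x \in A -> y \in A ->
  class_index A x = class_index A y -> out_nbh A x = out_nbh A y.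
Proof.
move=> xA yA xy; have mem z : z \in A -> out_nbh A z \in enum (nbh_classes A).
  by move=> zA; rewrite mem_enum imset_f.
by rewrite -(nth_index set0 (mem x xA)) -(nth_index set0 (mem y yA)); congr nth.
Qed.

End NeighbourhoodClasses.

Section UnionExpressible.
Variables (V : finType) (E : rel V) (m c : nat).
Hypothesis Esym : symmetric E.
Hypothesis mc : 3 * m <= c.
Variable d0 : 'I_c.
Variables (A1 A2 : {set V}).
Hypothesis A12 : [disjoint A1 & A2].
Hypothesis expr1 : class_expressible E c A1.
Hypothesis expr2 : class_expressible E c A2.
Hypothesis classes1 : #|nbh_classes E A1| <= m.
Hypothesis classes2 : #|nbh_classes E A2| <= m.
Hypothesis classes12 : #|nbh_classes E (A1 :|: A2)| <= m.

Local Notation A := (A1 :|: A2).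
Local Notation T1 := {x : V | x \in A1}.
Local Notation T2 := {x : V | x \in A2}.
Local Notation TA := {x : V | x \in A}.

Lemma notin_both v : v \in A1 -> v \in A2 -> False.
Proof. by move=> v1 v2; have /pred0P/(_ v) := A12; rewrite /= v1 v2. Qed.

Lemma out_nbh_subset (B B' : {set V}) x : B \subset B' ->
  out_nbh E B' x = [set z in out_nbh E B x | z \notin B'].
Proof.
move=> /subsetP BB'; apply/setP => z; rewrite !inE.
case: (boolP (z \in B')) => zB'; rewrite ?andbF //= !andbT.
suff -> : z \notin B by rewrite andbT.
by apply/negP => /BB'; rewrite (negbTE zB').
Qed.

Lemma edge_by_classes a u b w : a \in A1 -> u \in A1 -> b \in A2 -> w \in A2 ->
  out_nbh E A1 a = out_nbh E A1 u -> out_nbh E A2 b = out_nbh E A2 w -> E a b -> E u w.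
Proof.
move=> aA uA bA wA au bw Eab.
have : b \in out_nbh E A1 a by rewrite inE Eab /=; apply/negP => /notin_both; apply.
rewrite au inE => /andP[Eub _].
have : u \in out_nbh E A2 b by rewrite inE Esym Eub /=; apply/negP => /(notin_both uA).
by rewrite bw inE Esym => /andP[].
Qed.

Definition union_of_sum (y : T1 + T2) : TA :=
  match y with
  | inl u => exist _ (val u) (subsetP (subsetUl A1 A2) _ (valP u))
  | inr w => exist _ (val w) (subsetP (subsetUr A1 A2) _ (valP w))
  end.

Lemma union_of_sum_bij : bijective union_of_sum.
Proof.
apply: inj_card_bij.
  case=> [[u Hu]|[w Hw]] [[u' Hu']|[w' Hw']] /= [] uw; subst.
  - by congr inl; apply: val_inj.
  - by case: (notin_both Hu Hw').
  - by case: (notin_both Hu' Hw).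
  - by congr inr; apply: val_inj.
have card_mem (B : {set V}) : #|[pred x | x \in B]| = #|B| by apply: eq_card.
by rewrite card_sum !card_sig !card_mem cardsU leq_subr.
Qed.

Section Labelling.
Variable l : TA -> 'I_c.
Hypothesis l_classes : forall x y : TA, out_nbh E A (val x) = out_nbh E A (val y) -> l x = l y.
Variable a0 : TA.

Definition used_labels := [set l x | x : TA].

Lemma card_used_labels : #|used_labels| <= m.
Proof.
pose lab_of S := l (odflt a0 [pick x : TA | out_nbh E A (val x) == S]).
apply: leq_trans classes12; apply: leq_trans (leq_imset_card lab_of _).
apply/subset_leq_card/subsetP => i /imsetP[x _ ->].
apply/imsetP; exists (out_nbh E A (val x)); first by apply: imset_f; exact: (valP x).
rewrite /lab_of; case: pickP => [x' /eqP x'x | none]; first exact: l_classes.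
by move: (none x); rewrite eqxx.
Qed.

(* The two sides get labels from disjoint blocks of [m] labels unused by [l], one
   label per neighbourhood class. *)
Definition free_labels := enum (~: used_labels).

Lemma size_free_labels : 2 * m <= size free_labels.
Proof.
rewrite /free_labels -cardE; have := cardsC used_labels; rewrite card_ord.
by have := card_used_labels; move: mc; lia.
Qed.

Definition lab1 (x : T1) := nth d0 free_labels (class_index E A1 (val x)).
Definition lab2 (x : T2) := nth d0 free_labels (m + class_index E A2 (val x)).

Lemma class_index1_lt (x : T1) : class_index E A1 (val x) < size free_labels.
Proof.
by have := class_index_lt E (valP x); have := size_free_labels; move: classes1; lia.
Qed.

Lemma class_index2_lt (x : T2) : m + class_index E A2 (val x) < size free_labels.
Proof.
by have := class_index_lt E (valP x); have := size_free_labels; move: classes2; lia.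
Qed.

Lemma lab1_free (x : T1) : lab1 x \in free_labels. Proof. exact/mem_nth/class_index1_lt. Qed.
Lemma lab2_free (x : T2) : lab2 x \in free_labels. Proof. exact/mem_nth/class_index2_lt. Qed.

Lemma lab1_inj (x x' : T1) : lab1 x = lab1 x' -> out_nbh E A1 (val x) = out_nbh E A1 (val x').
Proof.
move/eqP; rewrite nth_uniq ?class_index1_lt ?enum_uniq // => /eqP.
exact: class_index_inj (valP x) (valP x').
Qed.

Lemma lab2_inj (x x' : T2) : lab2 x = lab2 x' -> out_nbh E A2 (val x) = out_nbh E A2 (val x').
Proof.
move/eqP; rewrite nth_uniq ?class_index2_lt ?enum_uniq // eqn_add2l => /eqP.
exact: class_index_inj (valP x) (valP x').
Qed.

Lemma lab12 (x : T1) (y : T2) : (lab1 x == lab2 y) = false.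
Proof.
rewrite nth_uniq ?class_index1_lt ?class_index2_lt ?enum_uniq //.
by apply/negbTE/eqP; have := class_index_lt E (valP x); move: classes1; lia.
Qed.

Definition lab := sum_lab lab1 lab2.

Definition joined_pairs :=
  [seq (lab1 p.1, lab2 p.2) | p <- enum [set p : T1 * T2 | E (val p.1) (val p.2)]].

Definition final_label i := if [pick y | lab y == i] is Some y then l (union_of_sum y) else l a0.

Lemma final_label_used i : final_label i \notin free_labels.
Proof. by rewrite mem_enum inE negbK /final_label; case: pickP => [y _|_]; apply: imset_f. Qed.

Lemma lab_free y : lab y \in free_labels.
Proof. by case: y => [u|w]; [apply: lab1_free | apply: lab2_free]. Qed.

Lemma final_label_lab y : final_label (lab y) = l (union_of_sum y).
Proof.
rewrite /final_label; case: pickP => [y' /eqP yy'|none]; last by move: (none y); rewrite eqxx.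
have sub1 := subsetUl A1 A2; have sub2 := subsetUr A1 A2.
case: y yy' => [u|w]; case: y' => [u'|w'] /= yy'; apply: l_classes => /=.
- by rewrite !(out_nbh_subset _ sub1) (lab1_inj yy').
- by move: (lab12 u w'); rewrite yy' eqxx.
- by move: (lab12 u' w); rewrite yy' eqxx.
- by rewrite !(out_nbh_subset _ sub2) (lab2_inj yy').
Qed.

Lemma joined_pairs_ne p : p \in joined_pairs -> p.1 != p.2.
Proof. by move=> /mapP[[a b] _ ->] /=; rewrite lab12. Qed.

Lemma joined_pairsE (u : T1) (w : T2) :
  has (fun p => (lab1 u == p.1) && (lab2 w == p.2)) joined_pairs = E (val u) (val w).
Proof.
apply/hasP/idP => [[p /mapP[[a b] ab ->]] /= /andP[/eqP ua /eqP wb] | Euw].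
  move: ab; rewrite mem_enum inE /= => Eab.
  by apply: (edge_by_classes (valP a) (valP u) (valP b) (valP w) _ _ Eab);
    [apply: lab1_inj | apply: lab2_inj].
exists (lab1 u, lab2 w); last by rewrite !eqxx.
by apply/mapP; exists (u, w); rewrite // mem_enum inE.
Qed.

Lemma join_rel_lab : forall y y',
  join_rel (sum_rel (@induced _ E A1) (@induced _ E A2)) lab joined_pairs y y' =
  @induced _ E A (union_of_sum y) (union_of_sum y').
Proof.
have lab_ne u w : (lab1 u == lab2 w) = false by apply: lab12.
have lab_ne' u w : (lab2 w == lab1 u) = false by rewrite eq_sym lab12.
case=> [u|w] [u'|w']; rewrite /join_rel /induced /=.
- rewrite -[RHS]orbF; congr orb; apply/negbTE/hasPn => _ /mapP[[a b] _ ->] /=.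
  by rewrite !lab_ne !andbF.
- rewrite -[sval u]/(val u) -[sval w']/(val w') -joined_pairsE.
  by apply: eq_in_has => _ /mapP[[a b] _ ->] /=; rewrite lab_ne' andbF orbF.
- rewrite Esym -[sval u']/(val u') -[sval w]/(val w) -joined_pairsE.
  by apply: eq_in_has => _ /mapP[[a b] _ ->] /=; rewrite lab_ne' /= andbC.
- rewrite -[RHS]orbF; congr orb; apply/negbTE/hasPn => _ /mapP[[a b] _ ->] /=.
  by rewrite !lab_ne' andbF.
Qed.

Lemma union_k_expr : k_expr (@induced _ E A) l.
Proof.
have K1 : k_expr (@induced _ E A1) lab1.
  by apply: expr1 => x y xy; rewrite /lab1 /class_index xy.
have K2 : k_expr (@induced _ E A2) lab2.
  by apply: expr2 => x y xy; rewrite /lab2 /class_index xy.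
have K := k_expr_join_seq (ke_union K1 K2) joined_pairs_ne.
have K' := k_expr_relabel_seq K (fun i _ => final_label_used i).
apply: (ke_iso K' union_of_sum_bij) => [y y'|y]; first by rewrite join_rel_lab.
by rewrite lab_free final_label_lab.
Qed.

End Labelling.

Lemma class_expressibleU : class_expressible E c A.
Proof.
move=> l l_classes; case: (pickP (fun _ : TA => true)) => [a0 _|none].
  exact: union_k_expr l_classes a0.
by apply: k_expr_card0; apply: eq_card0 => x; move: (none x).
Qed.

End UnionExpressible.

Section FromBranchDecomposition.
Variables (V : finType) (E : rel V) (k : nat).
Hypothesis Esym : symmetric E.
Hypothesis Eirr : irreflexive E.
Variables (N : finType) (t : rel N) (f : V -> N).
Hypothesis bd : branch_decomposition t f.
Hypothesis bd_width : bd_smwidth E t f <= k.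

Local Notation m := (2 ^ k + k + 2).
Local Notation c := (3 * m).

Lemma bd_tree : is_tree t. Proof. by case: bd. Qed.

Lemma card_cut_classes a b : t a b -> #|nbh_classes E (induced_cut t f a b)| <= m.
Proof.
move=> tab; apply/card_nbh_classes/leq_trans/bd_width.
exact: (@leq_bigmax_cond _ (fun p : N * N => t p.1 p.2)
  (fun p => sm E (induced_cut t f p.1 p.2)) (a, b) tab).
Qed.

Lemma induced_cut_leaf a b : is_leaf t a -> t a b -> exists v, induced_cut t f a b = [set v].
Proof.
case: bd => _ _ f_inj f_leaves la tab; have [v fv] := (f_leaves a).1 la.
exists v; apply/setP => w; rewrite in_induced_cut (side_leaf la tab) !inE -fv.
by apply/eqP/eqP => [/f_inj | ->].
Qed.

Definition away (a b : N) := [set y | t a y] :\ b.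

Lemma in_away a b y : (y \in away a b) = (y != b) && t a y.
Proof. by rewrite !inE. Qed.

Lemma induced_cut_inner a b : ~~ is_leaf t a -> t a b ->
  induced_cut t f a b = \bigcup_(y in away a b) induced_cut t f y a.
Proof.
case: bd => _ _ _ f_leaves nla tab; apply/setP => v.
rewrite in_induced_cut; apply/idP/bigcupP.
  case/(sideP bd_tree) => [fa | [y /andP[tay yb] Hy]]; last first.
    by exists y; rewrite ?in_induced_cut // in_away tay yb.
  by case/negP: nla; apply/f_leaves; exists v.
case=> y; rewrite in_away in_induced_cut => /andP[yb tay].
exact: (subsetP (side_sub bd_tree tay yb)).
Qed.

Lemma card_away a b : ~~ is_leaf t a -> t a b -> #|away a b| \in [:: 1; 2].
Proof.
case: bd => _ deg3 _ _ nla tab; move: (deg3 a) nla.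
rewrite /is_leaf /degree (cardsD1 b) inE tab -/(away a b) !inE.
by case: #|away a b| => [|[|[|]]].
Qed.

Lemma cut_expressible a b : t a b -> class_expressible E c (induced_cut t f a b).
Proof.
move: {2}#|side t a b| (leqnn #|side t a b|) => n; elim: n a b => [|n IH] a b Hn tab.
  by move: Hn; rewrite leqn0 cards_eq0 => /eqP side0; move: (side_self t a b); rewrite side0 inE.
case: (boolP (is_leaf t a)) => [la | nla].
  by have [v ->] := induced_cut_leaf la tab; apply: class_expressible1.
have IHy y : y \in away a b -> class_expressible E c (induced_cut t f y a).
  rewrite in_away => /andP[yb tay]; apply: IH; last by rewrite (tree_sym bd_tree).
  by rewrite -ltnS; apply: leq_trans Hn; apply: (side_lt bd_tree tay yb).
have classes_ab := card_cut_classes tab.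
rewrite (induced_cut_inner nla tab) in classes_ab *.
have := card_away nla tab; rewrite !inE => /orP[].
  by case/cards1P => y away_y; rewrite away_y big_set1; apply/IHy; rewrite away_y inE.
case/cards2P => y [z [yz away_yz]].
have [ya za] : y \in away a b /\ z \in away a b by rewrite away_yz !inE !eqxx orbT.
have [tay taz] : t a y /\ t a z by move: ya za; rewrite !in_away => /andP[_ ->] /andP[_ ->].
move: classes_ab; rewrite away_yz big_setU1 ?inE // big_set1 => classes_ab.
have c_gt0 : 0 < c by rewrite muln_gt0 addn2.
apply: (class_expressibleU Esym (leqnn c) (Ordinal c_gt0)) => //; try exact: IHy.
- apply/pred0P => v /=; rewrite !in_induced_cut.
  case: (boolP (f v \in side t y a)) => //= Hy.
  exact/negbTE/(side_disj bd_tree tay taz yz Hy).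
- by apply: card_cut_classes; rewrite (tree_sym bd_tree).
- by apply: card_cut_classes; rewrite (tree_sym bd_tree).
Qed.

Lemma induced_cut_setC a b : t a b -> induced_cut t f b a = ~: induced_cut t f a b.
Proof.
by move=> tab; apply/setP => v; rewrite in_setC !in_induced_cut (side_setC bd_tree tab) inE.
Qed.

Lemma setT_expressible : class_expressible E c setT.
Proof.
case: (pickP (@predT V)) => [v0 _ | none]; last first.
  rewrite (_ : [set: V] = set0); first exact: class_expressible0.
  by apply/setP => v; move: (none v).
case: (pickP (t (f v0))) => [b tab | isolated]; last first.
  rewrite (_ : [set: V] = [set v0]); first exact: class_expressible1.
  apply/setP => w; rewrite !inE.
  case: bd => _ _ f_inj _; apply/esym/eqP/f_inj.
  apply: (connect_ind (P := fun y => y = f v0) (tree_connect bd_tree (f v0) (f w))) => //.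
  by move=> u v + uv; rewrite uv isolated.
have c_gt0 : 0 < c by rewrite muln_gt0 addn2.
rewrite -(setUCr (induced_cut t f (f v0) b)) -(induced_cut_setC tab).
have tba : t b (f v0) by rewrite (tree_sym bd_tree).
apply: (class_expressibleU Esym (leqnn c) (Ordinal c_gt0)).
- by rewrite (induced_cut_setC tab) disjoints_subset setCK.
- exact: cut_expressible.
- exact: cut_expressible.
- exact: card_cut_classes.
- exact: card_cut_classes.
- rewrite (induced_cut_setC tab) setUCr.
  by apply: leq_trans (card_nbh_classesT E) _; rewrite addn2.
Qed.

Lemma cw_le_bd : cw_le E c.
Proof.
have c_gt0 : 0 < c by rewrite muln_gt0 addn2.
exists (fun _ => Ordinal c_gt0).
have val_bij : bijective (fun x : {x : V | x \in setT} => val x).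
  apply: inj_card_bij; first exact: val_inj.
  by rewrite card_sig; apply/eq_leq/eq_card => x; rewrite !inE.
have := setT_expressible (l := fun _ => Ordinal c_gt0) (fun _ _ _ => erefl).
by move/ke_iso/(_ val_bij); apply.
Qed.

End FromBranchDecomposition.

Theorem cw_le_of_smw_le (C : forall V : finType, rel V -> Prop) (k : nat) :
  (forall V E, C V E -> is_graph E) -> (forall V E, C V E -> smw_le E k) ->
  forall V E, C V E -> cw_le E (3 * (2 ^ k + k + 2)).
Proof.
move=> graphs smw V E CE; have [Esym Eirr] := graphs V E CE.
case: (smw V E CE) => [V0 | [N [t [f [bd bd_width]]]]]; last exact: cw_le_bd bd_width.
have c_gt0 : 0 < 3 * (2 ^ k + k + 2) by rewrite muln_gt0 addn2.
by exists (fun _ => Ordinal c_gt0); apply: k_expr_card0.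
Qed.

Theorem proposition1 :
  (forall (V : finType) (E : rel V) (k : nat),
      is_graph E -> tw_le E k -> smw_le E k.+1) /\
  (forall (C : forall V : finType, rel V -> Prop) (k : nat),
      (forall (V : finType) (E : rel V), C V E -> is_graph E) ->
      (forall (V : finType) (E : rel V), C V E -> smw_le E k) ->
      exists c : nat, forall (V : finType) (E : rel V), C V E -> cw_le E c).
Proof.
split; first exact: smw_le_tw.
by move=> C k graphs smw; exists (3 * (2 ^ k + k + 2)); apply: cw_le_of_smw_le.
Qed.
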